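(* Assume $K$ is a perfect $A$-field. Let $\Phi$ and $\Psi$ be $\mathbf t$-modules over $K$. Then there is an isomorphism of $\mathbb F_q[t]$-modules $$\operatorname{Ext}^1_\tau(\Phi,\Psi)\cong\operatorname{Ext}^1_\sigma(\Psi^\sigma,\Phi^\sigma).$$
   Context: $A=\mathbb F_q[t]$; $K$ a perfect field of characteristic $p$ with $\mathbb F_q$-algebra map $\iota:A\to K$, $\theta=\iota(t)$. $K\{\tau\}$: twisted polynomials with $\tau x=x^q\tau$; $K\{\sigma\}$: twisted polynomials with $\sigma x=x^{(-1)}\sigma$, where $c^{(-k)}=c^{q^{-k}}$ and $c^{(k)}=c^{q^k}$. A $\mathbf t$-module of dimension $d$ is an $\mathbb F_q$-algebra homomorphism $\Phi:\mathbb F_q[t]\to\mathrm{Mat}_d(K\{\tau\})$ with $\Phi_t=(\theta I+N)+\sum_{i\ge1}M_i\tau^i$, $N$ nilpotent; a $\mathbf t^\sigma$-module is defined identically with $\sigma$ in place of $\tau$. Define $(-)^\sigma:K\{\tau\}\to K\{\sigma\}$ by $(\sum a_i\tau^i)^\sigma=\sum a_i^{(-i)}\sigma^i$, and for a $\mathbf t$-module $\Phi$ of dimension $d$ let $\Phi^\sigma:\mathbb F_q[t]\to\mathrm{Mat}_d(K\{\sigma\})$ be given by $\Phi^\sigma_a=$ the transpose of the matrix obtained by applying $(-)^\sigma$ entrywise to $\Phi_a$ (a $\mathbf t^\sigma$-module). For $\mathbf t$-modules (resp. $\mathbf t^\sigma$-modules) $\Phi$ of dim $d$, $\Psi$ of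 dim $e$: $\mathrm{Der}(\Phi,\Psi)$ is the space of $\mathbb F_q$-linear $\delta:\mathbb F_q[t]\to\mathrm{Mat}_{e\times d}(K\{\tau\})$ (resp. $K\{\sigma\}$) with $\delta(ab)=\Psi_a\delta(b)+\delta(a)\Phi_b$; inner biderivations are $\delta^{(U)}(a)=U\Phi_a-\Psi_aU$; $\operatorname{Ext}^1_\tau(\Phi,\Psi)$ (resp. $\operatorname{Ext}^1_\sigma(\Phi,\Psi)$) is $\mathrm{Der}(\Phi,\Psi)/\mathrm{Der}_{in}(\Phi,\Psi)$ with $\mathbb F_q[t]$-module structure $a*[\delta]=[\Psi_a\delta]$ (equivalently $[\delta\Phi_a]$); it is the group of extensions of $\Phi$ by $\Psi$ in the respective category. *)

From HB Require Import structures.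
From mathcomp Require Import all_boot all_order all_algebra.
From Stdlib Require Import ClassicalEpsilon.
Set Implicit Arguments. Unset Strict Implicit. Unset Printing Implicit Defensive.
Import GRing.Theory.
Local Open Scope ring_scope.

Definition perfect_field (K : fieldType) : Prop :=
  forall p : nat, p \in [pchar K] -> forall y : K, exists x : K, x ^+ p = y.

(* q-Frobenius  c |-> c^(1) = c^q  and its inverse  c |-> c^(-1) (exists when K perfect). *)
Definition frob (K : fieldType) (q : nat) (x : K) : K := x ^+ q.
Definition frobinv (K : fieldType) (q : nat) (y : K) : K :=
  epsilon (inhabits (0 : K)) (fun x : K => x ^+ q = y).

(* Twisted polynomials K{phi}: an element sum_i a_i X^i of {poly K} stands for
   sum_i a_i tau^i; multiplication uses  X x = phi(x) X, i.e.
   (sum a_i X^i)(sum b_j X^j) = sum a_i phi^i(b_j) X^(i+j).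
   phi = frob q gives K{tau}; phi = frobinv q gives K{sigma}. *)
Definition tmul (K : fieldType) (phi : K -> K) (a b : {poly K}) : {poly K} :=
  \sum_(i < size a) \sum_(j < size b) (a`_i * iter i phi b`_j) *: 'X^(i + j).

Definition tmulmx (K : fieldType) (phi : K -> K) (m n p : nat)
  (A : 'M[{poly K}]_(m, n)) (B : 'M[{poly K}]_(n, p)) : 'M[{poly K}]_(m, p) :=
  \matrix_(i, k) \sum_j tmul phi (A i j) (B j k).

(* A = F_q[t] = {poly Fq}; the F_q-structure of K is f : Fq -> K;
   iota : A -> K is the F_q-algebra map with iota(t) = theta. *)

(* t-module (phi = frob q) / t^sigma-module (phi = frobinv q) of dimension d *)
Definition is_tmodule (Fq : finFieldType) (K : fieldType) (f : {rmorphism Fq -> K})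
  (phi : K -> K) (theta : K) (d : nat) (Phi : {poly Fq} -> 'M[{poly K}]_d) : Prop :=
  [/\ (forall (c : Fq) (a b : {poly Fq}), Phi (c *: a + b) = (f c)%:P *: Phi a + Phi b),
      Phi 1 = 1%:M,
      (forall a b : {poly Fq}, Phi (a * b) = tmulmx phi (Phi a) (Phi b)) &
      exists k : nat,
        iter k (mulmx (map_mx (fun x : {poly K} => x`_0) (Phi 'X) - theta%:M)) 1%:M = 0].

Definition is_der (Fq : finFieldType) (K : fieldType) (f : {rmorphism Fq -> K})
  (phi : K -> K) (d e : nat) (Phi : {poly Fq} -> 'M[{poly K}]_d)
  (Psi : {poly Fq} -> 'M[{poly K}]_e) (delta : {poly Fq} -> 'M[{poly K}]_(e, d)) : Prop :=
  (forall (c : Fq) (a b : {poly Fq}), delta (c *: a + b) = (f c)%:P *: delta a + delta b)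
  /\ (forall a b : {poly Fq},
        delta (a * b) = tmulmx phi (Psi a) (delta b) + tmulmx phi (delta a) (Phi b)).

Definition is_inner (Fq : finFieldType) (K : fieldType)
  (phi : K -> K) (d e : nat) (Phi : {poly Fq} -> 'M[{poly K}]_d)
  (Psi : {poly Fq} -> 'M[{poly K}]_e) (delta : {poly Fq} -> 'M[{poly K}]_(e, d)) : Prop :=
  exists U : 'M[{poly K}]_(e, d),
    forall a, delta a = tmulmx phi U (Phi a) - tmulmx phi (Psi a) U.

Definition to_sigma (K : fieldType) (q : nat) (p : {poly K}) : {poly K} :=
  \poly_(i < size p) iter i (frobinv q) p`_i.

Definition sigma_mod (Fq : finFieldType) (K : fieldType) (q d : nat)
  (Phi : {poly Fq} -> 'M[{poly K}]_d) : {poly Fq} -> 'M[{poly K}]_d :=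
  fun a => (map_mx (to_sigma q) (Phi a))^T.

(* F : Der(Phi1,Psi1) -> Der(Phi2,Psi2) induces an isomorphism of F_q[t]-modules
   Ext^1(Phi1,Psi1) = Der/Der_in  -->  Ext^1(Phi2,Psi2) = Der/Der_in,
   with a * [delta] = [Psi_a delta]:  the induced map on classes is well defined,
   additive, F_q[t]-linear, injective and surjective. *)
Definition ext_iso (Fq : finFieldType) (K : fieldType) (f : {rmorphism Fq -> K})
  (phi1 : K -> K) (d1 e1 : nat) (Phi1 : {poly Fq} -> 'M[{poly K}]_d1)
  (Psi1 : {poly Fq} -> 'M[{poly K}]_e1)
  (phi2 : K -> K) (d2 e2 : nat) (Phi2 : {poly Fq} -> 'M[{poly K}]_d2)
  (Psi2 : {poly Fq} -> 'M[{poly K}]_e2)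
  (F : ({poly Fq} -> 'M[{poly K}]_(e1, d1)) -> ({poly Fq} -> 'M[{poly K}]_(e2, d2)))
  : Prop :=
  let D1 := is_der f phi1 Phi1 Psi1 in
  let D2 := is_der f phi2 Phi2 Psi2 in
  let I1 := is_inner phi1 Phi1 Psi1 in
  let I2 := is_inner phi2 Phi2 Psi2 in
  [/\ (forall delta, D1 delta -> D2 (F delta)),
      (forall delta1 delta2, D1 delta1 -> D1 delta2 ->
         I2 (fun a => F (fun b => delta1 b + delta2 b) a - F delta1 a - F delta2 a)),
      (forall (c : {poly Fq}) delta, D1 delta ->
         I2 (fun a => F (fun b => tmulmx phi1 (Psi1 c) (delta b)) a
                      - tmulmx phi2 (Psi2 c) (F delta a))),
      (forall delta, D1 delta -> (I2 (F delta) <-> I1 delta)) &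
      (forall eta, D2 eta -> exists delta, D1 delta /\ I2 (fun a => F delta a - eta a))].

From HB Require Import structures.
From mathcomp Require Import all_boot all_order all_algebra all_field.
From Stdlib Require Import ClassicalEpsilon.
Set Implicit Arguments. Unset Strict Implicit. Unset Printing Implicit Defensive.
Import GRing.Theory.
Local Open Scope ring_scope.

(* The map  sum_i a_i tau^i |-> sum_i a_i^(-i) sigma^i  is an additive bijection
   K{tau} -> K{sigma} that reverses products: sigma^j undoes the twist by tau^j.
   Extended to matrices by also transposing, it turns the biderivation rule
   delta_(ab) = Psi_a delta_b + delta_a Phi_b into
   delta^s_(ba) = delta^s_b Psi^s_a + Phi^s_b delta^s_a, so delta |-> delta^s maps
   Der(Phi, Psi) bijectively onto Der(Psi^s, Phi^s), and the inner biderivation of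
   U onto the inner biderivation of -U^s.  As F_q[t] is commutative, Psi_c delta
   and delta Phi_c differ by an inner biderivation, which gives F_q[t]-linearity on
   Ext^1.  Perfectness of K is what makes the q-Frobenius invertible. *)

Lemma can2_morph2 (T : Type) (g h : T -> T) (op : T -> T -> T) :
  cancel g h -> cancel h g -> {morph g : x y / op x y} -> {morph h : x y / op x y}.
Proof. by move=> gK hK gop x y; apply: (can_inj gK); rewrite gop !hK. Qed.

Lemma iter_can (T : Type) (g h : T -> T) n : cancel g h -> cancel (iter n g) (iter n h).
Proof. by move=> gK; elim: n => // n IH x; rewrite iterSr iterS gK IH. Qed.

Lemma iter_subn (T : Type) (g h : T -> T) k i x : cancel h g -> (i <= k)%N ->
  iter k g (iter i h x) = iter (k - i) g x.
Proof. by move=> hK le_ik; rewrite -{1}(subnK le_ik) iterD (iter_can _ hK). Qed.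

Lemma sumr_ord_widen (V : zmodType) n N (F : nat -> V) : (n <= N)%N ->
  (forall i, (n <= i)%N -> F i = 0) -> \sum_(i < n) F i = \sum_(i < N) F i.
Proof.
move=> le_nN F0; rewrite -(subnKC le_nN) big_split_ord /= [X in _ + X]big1 ?addr0 //.
by move=> i _; rewrite F0 ?leq_addr.
Qed.

Section Iterates.
Variables (R : pzRingType) (g : R -> R).

Hypothesis gD : {morph g : x y / x + y}.

Lemma iterfD n : {morph iter n g : x y / x + y}.
Proof. by elim: n => // n IH x y /=; rewrite IH gD. Qed.

Lemma iterf0 n : iter n g 0 = 0.
Proof. by apply: (@addIr _ (iter n g 0)); rewrite -iterfD !add0r. Qed.

Lemma iterfN n : {morph iter n g : x / - x}.
Proof. by move=> x; apply/eqP; rewrite -addr_eq0 -iterfD addNr iterf0. Qed.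

Lemma iterf_sum n (I : Type) (r : seq I) (P : pred I) (F : I -> R) :
  iter n g (\sum_(i <- r | P i) F i) = \sum_(i <- r | P i) iter n g (F i).
Proof. exact: (big_morph _ (iterfD n) (iterf0 n)). Qed.

Hypothesis gM : {morph g : x y / x * y}.

Lemma iterfM n : {morph iter n g : x y / x * y}.
Proof. by elim: n => // n IH x y /=; rewrite IH gM. Qed.

End Iterates.

Section TwistedProduct.
Variables (K : fieldType) (phi : K -> K).

Lemma tmul0l b : tmul phi 0 b = 0.
Proof. by rewrite /tmul size_poly0 big_ord0. Qed.

Lemma tmul0r a : tmul phi a 0 = 0.
Proof. by rewrite /tmul size_poly0 big1 // => i _; rewrite big_ord0. Qed.

Lemma tmulmx0l m n p (B : 'M[{poly K}]_(n, p)) : tmulmx phi (0 : 'M_(m, n)) B = 0.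
Proof. by apply/matrixP => i k; rewrite !mxE big1 // => j _; rewrite mxE tmul0l. Qed.

Lemma tmulmx0r m n p (A : 'M[{poly K}]_(m, n)) : tmulmx phi A (0 : 'M_(n, p)) = 0.
Proof. by apply/matrixP => i k; rewrite !mxE big1 // => j _; rewrite mxE tmul0r. Qed.

Hypothesis phiD : {morph phi : x y / x + y}.

Lemma coef_tmul a b k :
  (tmul phi a b)`_k = \sum_(i < k.+1) a`_i * iter i phi b`_(k - i).
Proof.
pose G i := if (i <= k)%N then a`_i * iter i phi b`_(k - i) else 0.
transitivity (\sum_(i < size a) G i).
  rewrite coef_sum; apply: eq_bigr => i _.
  have -> : \sum_(j < size b) (a`_i * iter i phi b`_j) *: 'X^(i + j)
      = a`_i *: ('X^i * \poly_(j < size b) iter i phi b`_j).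
    rewrite poly_def mulr_sumr scaler_sumr; apply: eq_bigr => j _.
    by rewrite -scalerAr scalerA exprD.
  rewrite coefZ coefXnM coef_poly /G.
  case: ltnP => [_ | _]; first by rewrite mulr0.
  case: ltnP => // le_b.
  by rewrite [b`_(k - i)]nth_default // (iterf0 phiD).
have Ga i : (size a <= i)%N -> G i = 0.
  by move=> le_ai; rewrite /G nth_default // mul0r if_same.
have Gk i : (k.+1 <= i)%N -> G i = 0 by move=> lt_ki; rewrite /G leqNgt lt_ki.
rewrite (sumr_ord_widen (leq_addr k.+1 (size a)) Ga).
rewrite -(sumr_ord_widen (leq_addl (size a) k.+1) Gk).
by apply: eq_bigr => i _; rewrite /G -ltnS ltn_ord.
Qed.

Lemma tmulNl a b : tmul phi (- a) b = - tmul phi a b.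
Proof.
apply/polyP => k; rewrite coefN !coef_tmul -sumrN.
by apply: eq_bigr => i _; rewrite coefN mulNr.
Qed.

Lemma tmulNr a b : tmul phi a (- b) = - tmul phi a b.
Proof.
apply/polyP => k; rewrite coefN !coef_tmul -sumrN.
by apply: eq_bigr => i _; rewrite coefN (iterfN phiD) mulrN.
Qed.

Lemma tmulmxNl m n p (A : 'M[{poly K}]_(m, n)) (B : 'M_(n, p)) :
  tmulmx phi (- A) B = - tmulmx phi A B.
Proof.
apply/matrixP => i k; rewrite !mxE -sumrN.
by apply: eq_bigr => j _; rewrite mxE tmulNl.
Qed.

Lemma tmulmxNr m n p (A : 'M[{poly K}]_(m, n)) (B : 'M_(n, p)) :
  tmulmx phi A (- B) = - tmulmx phi A B.
Proof.
apply/matrixP => i k; rewrite !mxE -sumrN.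
by apply: eq_bigr => j _; rewrite mxE tmulNr.
Qed.

End TwistedProduct.

Section InnerBiderivations.
Variables (Fq : finFieldType) (K : fieldType) (phi : K -> K) (d e : nat).
Variables (Phi : {poly Fq} -> 'M[{poly K}]_d) (Psi : {poly Fq} -> 'M[{poly K}]_e).

Lemma is_inner_eq0 (delta : {poly Fq} -> 'M[{poly K}]_(e, d)) :
  delta =1 (fun=> 0) -> is_inner phi Phi Psi delta.
Proof. by move=> delta0; exists 0 => a; rewrite delta0 tmulmx0l tmulmx0r subrr. Qed.

(* The potential is [delta c], because [delta (a * c) = delta (c * a)]. *)
Lemma is_inner_der_mulC (f : {rmorphism Fq -> K}) delta c :
  is_der f phi Phi Psi delta ->
  is_inner phi Phi Psi
    (fun a => tmulmx phi (delta a) (Phi c) - tmulmx phi (Psi c) (delta a)).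
Proof.
case=> _ delta_mul; exists (delta c) => a.
apply/eqP; rewrite subr_eq addrAC eq_sym subr_eq addrC -delta_mul mulrC delta_mul.
by rewrite addrC.
Qed.

End InnerBiderivations.

(* For [psi = frobinv q] these are the paper's [(-)^sigma]: [to_sigma q] is
   [adjp (frobinv q)] and [sigma_mod q Phi a] is [adjmx (frobinv q) (Phi a)],
   both by conversion. *)
Definition adjp (K : fieldType) (psi : K -> K) (p : {poly K}) : {poly K} :=
  \poly_(i < size p) iter i psi p`_i.

Definition adjmx (K : fieldType) (psi : K -> K) {m n : nat}
  (A : 'M[{poly K}]_(m, n)) : 'M[{poly K}]_(n, m) := (map_mx (adjp psi) A)^T.

Section AdjointAdditive.
Variables (K : fieldType) (psi : K -> K).
Hypothesis psiD : {morph psi : x y / x + y}.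

Lemma coef_adjp p i : (adjp psi p)`_i = iter i psi p`_i.
Proof.
rewrite coef_poly; case: ltnP => // le_pi.
by rewrite nth_default // (iterf0 psiD).
Qed.

Lemma adjpD : {morph adjp psi : p q / p + q}.
Proof. by move=> p q; apply/polyP => i; rewrite coefD !coef_adjp coefD (iterfD psiD). Qed.

Lemma adjpN : {morph adjp psi : p / - p}.
Proof. by move=> p; apply/polyP => i; rewrite coefN !coef_adjp coefN (iterfN psiD). Qed.

Lemma adjp_sum (I : Type) (r : seq I) (P : pred I) (F : I -> {poly K}) :
  adjp psi (\sum_(i <- r | P i) F i) = \sum_(i <- r | P i) adjp psi (F i).
Proof.
have adjp0 : adjp psi 0 = 0 by apply/polyP => i; rewrite coef_adjp !coef0 (iterf0 psiD).
exact: (big_morph _ adjpD adjp0).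
Qed.

Lemma adjmxD m n : {morph @adjmx K psi m n : A B / A + B}.
Proof. by move=> A B; apply/matrixP => i j; rewrite !mxE adjpD. Qed.

Lemma adjmxB m n : {morph @adjmx K psi m n : A B / A - B}.
Proof. by move=> A B; apply/matrixP => i j; rewrite !mxE adjpD adjpN. Qed.

Hypothesis psiM : {morph psi : x y / x * y}.

Lemma adjmxZ m n c (A : 'M[{poly K}]_(m, n)) :
  psi c = c -> adjmx psi (c%:P *: A) = c%:P *: adjmx psi A.
Proof.
move=> psi_c; apply/matrixP => i j; rewrite !mxE; apply/polyP => k.
by rewrite coefCM !coef_adjp coefCM (iterfM psiM) iter_fix.
Qed.

End AdjointAdditive.

Lemma adjmxK (K : fieldType) (phi psi : K -> K) m n :
  {morph phi : x y / x + y} -> {morph psi : x y / x + y} -> cancel psi phi ->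
  cancel (@adjmx K psi m n) (@adjmx K phi n m).
Proof.
move=> phiD psiD psiK A; apply/matrixP => i j; rewrite !mxE; apply/polyP => k.
by rewrite (coef_adjp phiD) (coef_adjp psiD) (iter_can _ psiK).
Qed.

Section AdjointProduct.
Variables (K : fieldType) (phi psi : K -> K).
Hypotheses (phiD : {morph phi : x y / x + y}) (psiD : {morph psi : x y / x + y}).
Hypotheses (psiM : {morph psi : x y / x * y}) (phiK : cancel phi psi).

Lemma adjp_tmul a b : adjp psi (tmul phi a b) = tmul psi (adjp psi b) (adjp psi a).
Proof.
apply/polyP => k; rewrite (coef_adjp psiD) (coef_tmul phiD) (coef_tmul psiD).
rewrite (iterf_sum psiD) (reindex_inj rev_ord_inj) /=; apply: eq_bigr => i _.
have le_ik : (i <= k)%N by rewrite -ltnS ltn_ord.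
rewrite subSS !(coef_adjp psiD) (iterfM psiM) (iter_subn _ phiK) ?leq_subr // subKn //.
by rewrite mulrC -iterD subnKC.
Qed.

Lemma adjmx_tmulmx m n p (A : 'M[{poly K}]_(m, n)) (B : 'M[{poly K}]_(n, p)) :
  adjmx psi (tmulmx phi A B) = tmulmx psi (adjmx psi B) (adjmx psi A).
Proof.
apply/matrixP => i k; rewrite !mxE (adjp_sum psiD); apply: eq_bigr => j _.
by rewrite !mxE adjp_tmul.
Qed.

Variables (Fq : finFieldType) (d e : nat).
Variables (Phi : {poly Fq} -> 'M[{poly K}]_d) (Psi : {poly Fq} -> 'M[{poly K}]_e).
Variables (Phi' : {poly Fq} -> 'M[{poly K}]_e) (Psi' : {poly Fq} -> 'M[{poly K}]_d).
Hypotheses (Phi'E : Phi' =1 adjmx psi \o Psi) (Psi'E : Psi' =1 adjmx psi \o Phi).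

Lemma is_inner_adjmx delta delta' : delta' =1 adjmx psi \o delta ->
  is_inner phi Phi Psi delta -> is_inner psi Phi' Psi' delta'.
Proof.
move=> delta'E [U deltaE]; exists (- adjmx psi U) => a.
rewrite delta'E Phi'E Psi'E /= deltaE (adjmxB psiD) !adjmx_tmulmx.
by rewrite (tmulmxNl psiD) (tmulmxNr psiD) opprK addrC.
Qed.

Lemma is_der_adjmx (f : {rmorphism Fq -> K}) delta delta' :
  (forall c, psi (f c) = f c) -> delta' =1 adjmx psi \o delta ->
  is_der f phi Phi Psi delta -> is_der f psi Phi' Psi' delta'.
Proof.
move=> psi_f delta'E [deltaZ delta_mul]; split=> [c a b | a b].
  by rewrite !delta'E /= deltaZ (adjmxD psiD) (adjmxZ psiD psiM).
rewrite !delta'E Phi'E Psi'E /= mulrC delta_mul (adjmxD psiD) !adjmx_tmulmx.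
by rewrite addrC.
Qed.

End AdjointProduct.

Section ExtDuality.
Variables (Fq : finFieldType) (K : fieldType) (f : {rmorphism Fq -> K}).
Variables phi psi : K -> K.
Hypotheses (phiD : {morph phi : x y / x + y}) (phiM : {morph phi : x y / x * y}).
Hypotheses (phiK : cancel phi psi) (psiK : cancel psi phi).
Hypothesis phi_f : forall c, phi (f c) = f c.

Let psiD : {morph psi : x y / x + y} := can2_morph2 phiK psiK phiD.
Let psiM : {morph psi : x y / x * y} := can2_morph2 phiK psiK phiM.
Let psi_f c : psi (f c) = f c. Proof. by rewrite -{1}phi_f phiK. Qed.

Variables (d e : nat).
Variables (Phi : {poly Fq} -> 'M[{poly K}]_d) (Psi : {poly Fq} -> 'M[{poly K}]_e).

Lemma ext_iso_adjmx :
  ext_iso f phi Phi Psi psi (adjmx psi \o Psi) (adjmx psi \o Phi)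
          (fun delta => adjmx psi \o delta).
Proof.
have adjmx_der delta : is_der f phi Phi Psi delta ->
    is_der f psi (adjmx psi \o Psi) (adjmx psi \o Phi) (adjmx psi \o delta).
  exact: (is_der_adjmx phiD psiD psiM phiK).
have adjmx_psiK m n : cancel (@adjmx K psi m n) (adjmx phi) := adjmxK phiD psiD psiK.
have adjmx_phiK m n : cancel (@adjmx K phi m n) (adjmx psi) := adjmxK psiD phiD phiK.
split.
- exact: adjmx_der.
- move=> delta1 delta2 _ _; apply: is_inner_eq0 => a /=.
  by rewrite (adjmxD psiD) addrAC addrK subrr.
- move=> c delta der_delta; have [U UE] := is_inner_der_mulC c (adjmx_der _ der_delta).
  by exists U => a; rewrite -UE /= adjmx_tmulmx.
- move=> delta _; split; last exact: (is_inner_adjmx phiD psiD psiM phiK).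
  by apply: (is_inner_adjmx psiD phiD phiM psiK) => a /=; rewrite ?adjmx_psiK.
- move=> eta der_eta; exists (adjmx phi \o eta); split.
    apply: (is_der_adjmx psiD phiD phiM psiK _ _ phi_f _ der_eta) => a /=;
    by rewrite ?adjmx_psiK.
  by apply: is_inner_eq0 => a /=; rewrite adjmx_phiK subrr.
Qed.

End ExtDuality.

Section Frobenius.
Variables (K : fieldType) (q : nat).

Lemma frobM : {morph @frob K q : x y / x * y}.
Proof. by move=> x y; rewrite /frob exprMn. Qed.

Hypothesis frobD : {morph @frob K q : x y / x + y}.

Lemma frob_inj : injective (@frob K q).
Proof.
move=> x y frob_xy; apply/eqP; rewrite -subr_eq0.
have : frob q (x - y) = 0.
  by apply: (addIr (frob q y)); rewrite -frobD subrK frob_xy add0r.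
by rewrite /frob => /eqP; rewrite expf_eq0 => /andP[].
Qed.

Hypothesis frob_surj : forall y : K, exists x, frob q x = y.

Lemma frobinvK : cancel (@frobinv K q) (frob q).
Proof. by move=> y; apply: (epsilon_spec (inhabits 0) (fun x => x ^+ q = y)). Qed.

Lemma frobK : cancel (@frob K q) (frobinv q).
Proof. by move=> x; apply: frob_inj; rewrite frobinvK. Qed.

End Frobenius.

Section FrobeniusOfFiniteSubfield.
Variables (Fq : finFieldType) (K : fieldType) (f : {rmorphism Fq -> K}).

Lemma frob_cardD : {morph @frob K #|Fq| : x y / x + y}.
Proof.
have [p p_pr pcharFq] := finPcharP Fq; have pcharK := rmorph_pchar f pcharFq.
move=> x y; rewrite /frob exprDn_pchar // (card_pprimeChar pcharFq).
by rewrite pnatX (pnatE _ p_pr) pcharK.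
Qed.

Lemma frob_card_surj : perfect_field K -> forall y : K, exists x, frob #|Fq| x = y.
Proof.
move=> perfK; have [p _ pcharFq] := finPcharP Fq.
have pcharK := rmorph_pchar f pcharFq.
rewrite /frob (card_pprimeChar pcharFq); elim: (logn _ _) => [|n IH] y.
  by exists y; rewrite expr1.
have [z <-] := IH y; have [x <-] := perfK p pcharK z.
by exists x; rewrite expnS exprM.
Qed.

Lemma frob_card_fixed c : frob #|Fq| (f c) = f c.
Proof. by rewrite /frob -rmorphXn expf_card. Qed.

End FrobeniusOfFiniteSubfield.

Theorem theorem7p3 (Fq : finFieldType) (K : fieldType) (f : {rmorphism Fq -> K})
  (theta : K) (d e : nat)
  (Phi : {poly Fq} -> 'M[{poly K}]_d) (Psi : {poly Fq} -> 'M[{poly K}]_e) :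
  perfect_field K ->
  is_tmodule f (frob #|Fq|) theta Phi ->
  is_tmodule f (frob #|Fq|) theta Psi ->
  exists F : ({poly Fq} -> 'M[{poly K}]_(e, d)) -> ({poly Fq} -> 'M[{poly K}]_(d, e)),
    ext_iso f (frob #|Fq|) Phi Psi
              (frobinv #|Fq|) (sigma_mod #|Fq| Psi) (sigma_mod #|Fq| Phi) F.
Proof.
(* The duality holds for any F_q-linear Phi and Psi. *)
move=> perfK _ _.
have frobD := frob_cardD f; have frob_surj := frob_card_surj f perfK.
exists (fun delta => adjmx (frobinv #|Fq|) \o delta).
exact: (ext_iso_adjmx frobD (@frobM K _) (frobK frobD frob_surj) (frobinvK frob_surj)
                      (frob_card_fixed f)).
Qed.
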